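(* Let $L\ge 2$ be an integer, $\delta>0$, and let $\mathscr A_{L,\delta}:=\{(2j-L-1)\delta: j=1,\dots,L\}$ (the arithmetic progression of length $L$, spacing $2\delta$, symmetric about $0$). Let $H=I-\tilde H$ be an $m\times m$ matrix where $\tilde H$ is strictly lower triangular, and let $\mu\ge0$ satisfy $\|\tilde H\|_{\infty\to\infty}+\mu/\delta\le L$. Then there exists a map $Q:[-\mu,\mu]^m\to\mathscr A_{L,\delta}^m$ (computable by a recursive algorithm that determines $q_n$ from $y_1,\dots,y_n$ and $q_1,\dots,q_{n-1}$) such that for every $y\in[-\mu,\mu]^m$, with $q:=Q(y)$, the vector $u:=H^{-1}(y-q)$ satisfies $y-q=Hu$ and $\|u\|_\infty\le\delta$.
   Context: $\|A\|_{\infty\to\infty}$ denotes the operator norm of $A$ from $\ell^\infty$ to $\ell^\infty$ (maximum absolute row sum). Since $H$ is lower triangular with unit diagonal, it is invertible. *)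

From HB Require Import structures.
From mathcomp Require Import all_boot all_order all_algebra.
Set Implicit Arguments. Unset Strict Implicit. Unset Printing Implicit Defensive.
Import Order.TTheory GRing.Theory Num.Theory.
Local Open Scope ring_scope.

Definition opnorm_inf (R : realFieldType) (m : nat) (A : 'M[R]_m) : R :=
  \big[Num.max/0]_(i < m) \sum_(j < m) `|A i j|.

Definition vnorm_inf (R : realFieldType) (m : nat) (u : 'cV[R]_m) : R :=
  \big[Num.max/0]_(i < m) `|u i 0|.

Definition in_alphabet (R : realFieldType) (L : nat) (delta a : R) : Prop :=
  exists j : 'I_L, a = ((2 * j.+1)%:R - L%:R - 1) * delta.

Definition strictly_lower (R : realFieldType) (m : nat) (A : 'M[R]_m) : Prop :=
  forall i j : 'I_m, (i <= j)%N -> A i j = 0.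

Definition in_box (R : realFieldType) (m : nat) (mu : R) (y : 'cV[R]_m) : Prop :=
  forall i : 'I_m, - mu <= y i 0 <= mu.

From HB Require Import structures.
From mathcomp Require Import all_boot all_order all_algebra.
From mathcomp Require Import ring lra.
Set Implicit Arguments. Unset Strict Implicit. Unset Printing Implicit Defensive.
Import Order.TTheory GRing.Theory Num.Theory.
Local Open Scope ring_scope.

(* Noise shaping (Sigma-Delta quantization): run the recursion
   u_n = y_n + (Ht u)_n - q_n with q_n a point of the alphabet within delta of
   y_n + (Ht u)_n.  Since Ht is strictly lower triangular this only uses
   u_1, ..., u_(n-1), so the scheme is causal, and y - q = (I - Ht) u by
   construction.  If |u_k| <= delta for k < n, the quantizer input is bounded
   by mu + ||Ht|| delta <= L delta, and an alphabet of L points with spacing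
   2 delta covers [-L delta, L delta] within delta; so |u_n| <= delta again. *)

Section Alphabet.

Variables (R : realFieldType) (L : nat) (delta : R).

Definition alphabet_point (j : nat) : R := ((2 * j.+1)%:R - L%:R - 1) * delta.

Lemma alphabet_pointS j : alphabet_point j.+1 = alphabet_point j + 2 * delta.
Proof. by rewrite /alphabet_point mulnS natrD; ring. Qed.

Lemma alphabet_point0 : alphabet_point 0 - delta = - (L%:R * delta).
Proof. by rewrite /alphabet_point; ring. Qed.

Lemma alphabet_point_last : (0 < L)%N -> alphabet_point L.-1 + delta = L%:R * delta.
Proof. by move=> L_gt0; rewrite /alphabet_point prednK // natrM; ring. Qed.

Lemma alphabet_cover n v :
  alphabet_point 0 - delta <= v <= alphabet_point n + delta ->
  exists2 j, (j <= n)%N & `|v - alphabet_point j| <= delta.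
Proof.
elim: n => [|n IHn] /andP[v_ge v_le].
  by exists 0%N => //; rewrite ler_distl; apply/andP; split; lra.
have [v_le_n | v_gt_n] := lerP v (alphabet_point n + delta).
  have [|j j_le_n close] := IHn; first by rewrite v_ge v_le_n.
  by exists j => //; apply: leqW.
exists n.+1 => //; move: v_le; rewrite ler_distl alphabet_pointS => v_le.
by apply/andP; split; lra.
Qed.

Definition quantize (v : R) : R :=
  if [pick j : 'I_L | `|v - alphabet_point j| <= delta] is Some j
  then alphabet_point j else alphabet_point 0.

Hypothesis L_gt0 : (0 < L)%N.

Lemma quantize_in_alphabet v : in_alphabet L delta (quantize v).
Proof. by rewrite /quantize; case: pickP => [j _|_]; [exists j | exists (Ordinal L_gt0)]. Qed.

Lemma quantize_err v : `|v| <= L%:R * delta -> `|v - quantize v| <= delta.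
Proof.
rewrite ler_norml -alphabet_point0 -alphabet_point_last // => /alphabet_cover[j].
rewrite -ltnS prednK // => j_lt_L close.
rewrite /quantize; case: pickP => [k //|/(_ (Ordinal j_lt_L))].
by rewrite /= close.
Qed.

End Alphabet.

(* Solving a system in which the i-th unknown is determined by the earlier
   ones, filling in one coordinate per step. *)
Section CausalFixpoint.

Variables (S T : Type) (x0 : T) (m : nat).
Variable F : 'cV[S]_m -> 'cV[T]_m -> 'I_m -> T.

Hypothesis F_causal : forall (y y' : 'cV[S]_m) (w w' : 'cV[T]_m) (i : 'I_m),
  (forall k : 'I_m, (k <= i)%N -> y k 0 = y' k 0) ->
  (forall k : 'I_m, (k < i)%N -> w k 0 = w' k 0) ->
  F y w i = F y' w' i.

Fixpoint causal_iter (y : 'cV[S]_m) (n : nat) : 'cV[T]_m :=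
  if n is n'.+1 then
    \col_i (if i == n' :> nat then F y (causal_iter y n') i
            else causal_iter y n' i 0)
  else const_mx x0.

Definition causal_fix y := causal_iter y m.

Lemma causal_iterE (y : 'cV[S]_m) n (i : 'I_m) :
  causal_iter y n i 0 = if (i < n)%N then F y (causal_iter y n) i else x0.
Proof.
elim: n i => [|n IHn] i /=; first by rewrite mxE.
have stepE (k : 'I_m) : (k <= n)%N ->
    F y (causal_iter y n) k = F y (causal_iter y n.+1) k.
  move=> k_le_n; apply: F_causal => // l l_lt_k; rewrite /= mxE.
  by case: eqP => // l_eq_n; move: (leq_trans l_lt_k k_le_n); rewrite l_eq_n ltnn.
rewrite mxE ltnS; case: eqP => [i_eq_n | i_neq_n]; first by rewrite i_eq_n leqnn stepE // i_eq_n.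
rewrite IHn; case: ltngtP => [i_lt_n | // | /i_neq_n //].
exact: stepE (ltnW i_lt_n).
Qed.

Lemma causal_fixE (y : 'cV[S]_m) (i : 'I_m) : causal_fix y i 0 = F y (causal_fix y) i.
Proof. by rewrite /causal_fix causal_iterE ltn_ord. Qed.

Lemma causal_iter_causal (y y' : 'cV[S]_m) (n : 'I_m) :
  (forall k : 'I_m, (k <= n)%N -> y k 0 = y' k 0) ->
  forall j (i : 'I_m), (i <= n)%N -> causal_iter y j i 0 = causal_iter y' j i 0.
Proof.
move=> y_eq; elim=> [|j IHj] i i_le_n /=; first by rewrite !mxE.
rewrite !mxE; case: ifP => _; last exact: IHj.
apply: F_causal => [k k_le_i | k k_lt_i]; first by rewrite y_eq // (leq_trans k_le_i).
by rewrite IHj // (leq_trans (ltnW k_lt_i)).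
Qed.

End CausalFixpoint.

Section StrictlyLower.

Variables (R : realFieldType) (m : nat) (Ht : 'M[R]_m).
Hypothesis Ht_lower : strictly_lower Ht.

Lemma strictly_lower_mulmx_causal (w w' : 'cV[R]_m) (i : 'I_m) :
  (forall k : 'I_m, (k < i)%N -> w k 0 = w' k 0) ->
  (Ht *m w) i 0 = (Ht *m w') i 0.
Proof.
move=> w_eq; rewrite !mxE; apply: eq_bigr => k _.
by case: (ltnP k i) => [/w_eq -> // | i_le_k]; rewrite Ht_lower // !mul0r.
Qed.

Lemma strictly_lower_mulmx_bound (w : 'cV[R]_m) (b : R) (i : 'I_m) : 0 <= b ->
  (forall k : 'I_m, (k < i)%N -> `|w k 0| <= b) ->
  `|(Ht *m w) i 0| <= opnorm_inf Ht * b.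
Proof.
move=> b_ge0 w_le; rewrite mxE; apply: (le_trans (ler_norm_sum _ _ _)).
apply: (@le_trans _ _ ((\sum_k `|Ht i k|) * b)); last first.
  by rewrite ler_wpM2r // /opnorm_inf (le_bigmax _ (fun i => \sum_k `|Ht i k|)).
rewrite mulr_suml; apply: ler_sum => k _; rewrite normrM.
case: (ltnP k i) => [/w_le w_le_b | i_le_k]; first by rewrite ler_wpM2l.
by rewrite Ht_lower // normr0 !mul0r.
Qed.

Lemma unitriangular_unitmx : 1%:M - Ht \in unitmx.
Proof.
have Ht_diag (i : 'I_m) : Ht i i = 0 by rewrite Ht_lower.
rewrite unitmxE det_trig.
  by rewrite big1 ?unitr1 // => i _; rewrite !mxE eqxx Ht_diag subr0.
apply/is_trig_mxP => i j i_lt_j; rewrite !mxE Ht_lower ?(ltnW i_lt_j) // subr0.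
by case: eqP i_lt_j => // ->; rewrite ltnn.
Qed.

End StrictlyLower.

Section NoiseShaping.

Variables (R : realFieldType) (L m : nat) (delta : R) (Ht : 'M[R]_m).
Hypothesis Ht_lower : strictly_lower Ht.

Definition quantizer_input (y w : 'cV[R]_m) (i : 'I_m) : R := y i 0 + (Ht *m w) i 0.

Definition state_update (y w : 'cV[R]_m) (i : 'I_m) : R :=
  quantizer_input y w i - quantize L delta (quantizer_input y w i).

Definition noise_state (y : 'cV[R]_m) : 'cV[R]_m := causal_fix 0 state_update y.

Definition noise_shaping_quantizer (y : 'cV[R]_m) : 'cV[R]_m :=
  \col_i quantize L delta (quantizer_input y (noise_state y) i).

Lemma quantizer_input_causal (y y' w w' : 'cV[R]_m) (i : 'I_m) :
  (forall k : 'I_m, (k <= i)%N -> y k 0 = y' k 0) ->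
  (forall k : 'I_m, (k < i)%N -> w k 0 = w' k 0) ->
  quantizer_input y w i = quantizer_input y' w' i.
Proof.
by move=> y_eq w_eq; rewrite /quantizer_input y_eq // (strictly_lower_mulmx_causal Ht_lower w_eq).
Qed.

Lemma state_update_causal (y y' w w' : 'cV[R]_m) (i : 'I_m) :
  (forall k : 'I_m, (k <= i)%N -> y k 0 = y' k 0) ->
  (forall k : 'I_m, (k < i)%N -> w k 0 = w' k 0) ->
  state_update y w i = state_update y' w' i.
Proof. by move=> y_eq w_eq; rewrite /state_update (quantizer_input_causal y_eq w_eq). Qed.

Lemma noise_stateE (y : 'cV[R]_m) (i : 'I_m) : noise_state y i 0 = state_update y (noise_state y) i.
Proof. exact/causal_fixE/state_update_causal. Qed.

Lemma noise_shaping_quantizer_causal (y y' : 'cV[R]_m) (n : 'I_m) :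
  (forall k : 'I_m, (k <= n)%N -> y k 0 = y' k 0) ->
  noise_shaping_quantizer y n 0 = noise_shaping_quantizer y' n 0.
Proof.
move=> y_eq; rewrite !mxE; congr quantize; apply: quantizer_input_causal => // k k_lt_n.
exact: causal_iter_causal state_update_causal _ _ _ y_eq _ _ (ltnW k_lt_n).
Qed.

Lemma noise_shaping_residual (y : 'cV[R]_m) :
  y - noise_shaping_quantizer y = (1%:M - Ht) *m noise_state y.
Proof.
apply/matrixP => i j; rewrite (ord1 j) mulmxBl mul1mx !mxE noise_stateE.
by rewrite /state_update /quantizer_input mxE; ring.
Qed.

Lemma noise_state_bound (mu : R) (y : 'cV[R]_m) : (0 < L)%N -> 0 <= delta ->
  mu + opnorm_inf Ht * delta <= L%:R * delta -> in_box mu y ->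
  forall i : 'I_m, `|noise_state y i 0| <= delta.
Proof.
move=> L_gt0 delta_ge0 budget y_box.
suff bound_below n (i : 'I_m) : (i < n)%N -> `|noise_state y i 0| <= delta.
  by move=> i; apply: (bound_below i.+1).
elim: n i => [|n IHn] i //; rewrite ltnS => i_le_n.
rewrite noise_stateE; apply: quantize_err => //.
apply: le_trans (ler_normD _ _) (le_trans _ budget); apply: lerD.
  by rewrite ler_norml y_box.
apply: strictly_lower_mulmx_bound => // k k_lt_i.
exact: IHn (leq_trans k_lt_i i_le_n).
Qed.

End NoiseShaping.

Theorem proposition1 (R : realFieldType) (L m : nat) (delta mu : R)
  (Ht : 'M[R]_m)
  (hL : (2 <= L)%N) (hdelta : 0 < delta) (hmu : 0 <= mu)
  (hHt : strictly_lower Ht)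
  (hnorm : opnorm_inf Ht + mu / delta <= L%:R) :
  let H := 1%:M - Ht in
  exists Q : 'cV[R]_m -> 'cV[R]_m,
    (* causality: q_n depends only on y_1, ..., y_n *)
    (forall y y' : 'cV[R]_m, in_box mu y -> in_box mu y' ->
       forall n : 'I_m, (forall k : 'I_m, (k <= n)%N -> y k 0 = y' k 0) ->
       Q y n 0 = Q y' n 0) /\
    (forall y : 'cV[R]_m, in_box mu y ->
       let q := Q y in
       let u := invmx H *m (y - q) in
       (forall i : 'I_m, in_alphabet L delta (q i 0)) /\
       y - q = H *m u /\ vnorm_inf u <= delta).
Proof.
move=> H; have L_gt0 : (0 < L)%N by apply: leq_trans hL.
have budget : mu + opnorm_inf Ht * delta <= L%:R * delta.
  rewrite -[mu](divfK (lt0r_neq0 hdelta)) -mulrDl addrC.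
  by rewrite ler_wpM2r // ltW.
exists (noise_shaping_quantizer L delta Ht); split.
  by move=> y y' _ _ n; apply: noise_shaping_quantizer_causal.
move=> y y_box q u.
have u_state : u = noise_state L delta Ht y.
  by rewrite /u noise_shaping_residual // mulmxA mulVmx ?mul1mx // unitriangular_unitmx.
split; first by move=> i; rewrite mxE; apply: quantize_in_alphabet.
split; first by rewrite u_state noise_shaping_residual.
rewrite u_state /vnorm_inf; apply: bigmax_le => [|i _]; first exact: ltW.
exact: noise_state_bound (ltW hdelta) budget y_box i.
Qed.
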